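(* Let $n>0$ and $d>0$ be integers and let $k,r$ be integers with $n=kd+r$. If $k\geq |r|+1$, then $d\in A_n$.
   Context: A walk is a finite sequence $z_0,z_1,\dots,z_l$ of Gaussian integers with $|z_{j+1}-z_j|=1$ for all $0\le j<l$. For natural numbers $n,d$, $n$ is called $d$-avoidable if there exists a walk $(z_j)$ and indices $r,s$ with $z_r-z_s=n$ such that $z_t-z_u\neq d$ for all indices $t,u$. $A_n$ denotes the set of all $d\in\mathbb{N}$ such that $n$ is not $d$-avoidable. *)

(* Gaussian integers a+bi are represented as pairs (a,b) : Z*Z. *)
From Stdlib Require Import ZArith Lia.
Open Scope Z_scope.

Definition gauss := (Z * Z)%type.

Definition gsub (z w : gauss) : gauss := (fst z - fst w, snd z - snd w).

Definition gnat (m : nat) : gauss := (Z.of_nat m, 0).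

Definition unit_step (z : gauss) : Prop := fst z * fst z + snd z * snd z = 1.

Definition is_walk (l : nat) (z : nat -> gauss) : Prop :=
  forall j : nat, (j < l)%nat -> unit_step (gsub (z (S j)) (z j)).

Definition avoidable (n d : nat) : Prop :=
  exists (l : nat) (z : nat -> gauss), is_walk l z /\
    (exists r s : nat, (r <= l)%nat /\ (s <= l)%nat /\ gsub (z r) (z s) = gnat n) /\
    (forall t u : nat, (t <= l)%nat -> (u <= l)%nat -> gsub (z t) (z u) <> gnat d).

Definition in_A (n d : nat) : Prop := ~ avoidable n d.

(* A walk with two points differing by n = k d + r is dilated by k, each step
   becoming k unit steps; the dilated walk then has two points differing by k n.
   By the universal chord theorem for lattice walks (a chord of length k N
   forces one of length N), it has two points differing by n.  Every point of
   the dilated walk has the form k z_a + t (z_(a+1) - z_a) with 0 <= t <= k, and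
   since |r| < k the two points come from points of the original walk, or their
   successors, that differ by exactly d.

   The chord theorem is a separation argument.  If chords k N exist but none of
   length N or (k - 1) N, the subwalk from a highest to a lowest point of the
   walk, continued by vertical half-lines up and down, splits the lattice into
   two sides.  The translates of the walk by N and by -(k - 1) N avoid this
   curve, so each stays on one side, which is read off at its translated highest
   point: opposite sides.  But a chord k N makes the two translates meet. *)

From Stdlib Require Import ZArith Lia Bool Classical.
Open Scope Z_scope.

Lemma unit_step_cases (w : gauss) :
  unit_step w -> w = (1, 0) \/ w = (-1, 0) \/ w = (0, 1) \/ w = (0, -1).
Proof.
  destruct w as [a b]; unfold unit_step; simpl; intros H.
  assert (Ha : -1 <= a <= 1) by nia. assert (Hb : -1 <= b <= 1) by nia.
  assert (Ha' : a = -1 \/ a = 0 \/ a = 1) by lia.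
  assert (Hb' : b = -1 \/ b = 0 \/ b = 1) by lia.
  destruct Ha' as [-> | [-> | ->]]; destruct Hb' as [-> | [-> | ->]];
    simpl in H; try lia; auto 6.
Qed.

Lemma neighbor_cases (a b : gauss) : unit_step (gsub b a) ->
  b = (fst a + 1, snd a) \/ b = (fst a - 1, snd a) \/
  b = (fst a, snd a + 1) \/ b = (fst a, snd a - 1).
Proof.
  destruct a as [ax ay], b as [bx by_]; unfold gsub; simpl.
  intros H; destruct (unit_step_cases _ H) as [E | [E | [E | E]]];
    injection E as Ex Ey; [left | right; left | right; right; left | right; right; right];
    f_equal; lia.
Qed.

Lemma unit_step_gsub_sym (a b : gauss) : unit_step (gsub a b) -> unit_step (gsub b a).
Proof. unfold unit_step, gsub; simpl; intros; nia. Qed.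

Lemma neq_pair (a p : gauss) : a <> p -> fst a <> fst p \/ snd a <> snd p.
Proof.
  destruct a as [a1 a2], p as [p1 p2]; simpl; intros H.
  destruct (Z.eq_dec a1 p1) as [-> |]; [right; intros ->; now apply H | now left].
Qed.

Fixpoint xor_upto (f : nat -> bool) (n : nat) : bool :=
  match n with O => false | S m => xorb (xor_upto f m) (f m) end.

Lemma xor_upto_xorb f g n :
  xor_upto (fun i => xorb (f i) (g i)) n = xorb (xor_upto f n) (xor_upto g n).
Proof.
  induction n as [|n IH]; simpl; [reflexivity|]. rewrite IH.
  destruct (xor_upto f n), (xor_upto g n), (f n), (g n); reflexivity.
Qed.

Lemma xor_upto_telescope (h : nat -> bool) n :
  xor_upto (fun i => xorb (h i) (h (S i))) n = xorb (h O) (h n).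
Proof.
  induction n as [|n IH]; simpl; [now destruct (h O)|]. rewrite IH.
  destruct (h O), (h n), (h (S n)); reflexivity.
Qed.

Lemma xor_upto_ext f g n :
  (forall i, (i < n)%nat -> f i = g i) -> xor_upto f n = xor_upto g n.
Proof.
  induction n as [|n IH]; intros H; simpl; [reflexivity|].
  rewrite IH by (intros; apply H; lia). rewrite H by lia. reflexivity.
Qed.

Lemma xor_upto_false f n : (forall i, (i < n)%nat -> f i = false) -> xor_upto f n = false.
Proof.
  intros H. rewrite (xor_upto_ext f (fun _ => false)) by exact H.
  clear H; induction n as [|n IH]; simpl; [|rewrite IH]; reflexivity.
Qed.

Ltac destruct_Z_tests :=
  repeat (match goal with
  | |- context [Z.eqb ?a ?b] => destruct (Z.eqb_spec a b)
  | |- context [Z.leb ?a ?b] => destruct (Z.leb_spec a b)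
  end; simpl; try reflexivity; try (exfalso; lia)).

(* The edge a b is a vertical unit edge crossing the horizontal half-line that
   starts at (x - 1/2, y + 1/2) and goes right. *)
Definition ray_crossing (a b : gauss) (x y : Z) : bool :=
  (fst a =? fst b) && (x <=? fst a) &&
  (((snd a =? y) && (snd b =? y + 1)) || ((snd a =? y + 1) && (snd b =? y))).

Definition on_ray (x y : Z) (a : gauss) : bool := (snd a =? y) && (x <=? fst a).

Lemma ray_crossing_shift_up (a b : gauss) x y :
  unit_step (gsub b a) -> a <> (x, y + 1) -> b <> (x, y + 1) ->
  xorb (ray_crossing a b x y) (ray_crossing a b x (y + 1)) =
  xorb (on_ray x (y + 1) a) (on_ray x (y + 1) b).
Proof.
  intros U Ha Hb; apply neq_pair in Ha, Hb; destruct a as [ax ay].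
  destruct (neighbor_cases _ _ U) as [-> | [-> | [-> | ->]]];
    unfold ray_crossing, on_ray in *; simpl in *; destruct_Z_tests.
Qed.

Lemma ray_crossing_shift_right (a b : gauss) x y :
  unit_step (gsub b a) -> a <> (x, y) -> b <> (x, y) ->
  ray_crossing a b x y = ray_crossing a b (x + 1) y.
Proof.
  intros U Ha Hb; apply neq_pair in Ha, Hb; destruct a as [ax ay].
  destruct (neighbor_cases _ _ U) as [-> | [-> | [-> | ->]]];
    unfold ray_crossing in *; simpl in *; destruct_Z_tests.
Qed.

Section Side.

Variables (l : nat) (s : nat -> gauss).
Hypothesis Ws : is_walk l s.

Definition crossing_parity (x y : Z) : bool :=
  xor_upto (fun i => ray_crossing (s i) (s (S i)) x y) l.

(* Parity of the number of crossings of the half-line from (x - 1/2, y + 1/2),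
   p = (x, y), with the curve made of the walk s, the vertical half-line going
   up from s 0 and the one going down from s l. *)
Definition side (p : gauss) : bool :=
  xorb (crossing_parity (fst p) (snd p))
    (xorb ((snd (s O) <=? snd p) && (fst p <=? fst (s O)))
          ((snd p <=? snd (s l) - 1) && (fst p <=? fst (s l)))).

Definition off_curve (p : gauss) : Prop :=
  (forall i, (i <= l)%nat -> s i <> p) /\
  ~ (fst p = fst (s O) /\ snd (s O) <= snd p) /\
  ~ (fst p = fst (s l) /\ snd p <= snd (s l)).

Lemma side_shift_right x y : off_curve (x, y) -> off_curve (x + 1, y) ->
  side (x, y) = side (x + 1, y).
Proof.
  intros [Fs [Ftop Fbot]] [_ [Gtop Gbot]]; unfold side, crossing_parity; simpl in *.
  rewrite (xor_upto_ext _ (fun i => ray_crossing (s i) (s (S i)) (x + 1) y))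
    by (intros i Hi; apply ray_crossing_shift_right; [apply Ws | apply Fs ..]; lia).
  f_equal. destruct (s O) as [a0 b0], (s l) as [a1 b1]; simpl in *; destruct_Z_tests.
Qed.

Lemma crossing_parity_shift_up x y : (forall i, (i <= l)%nat -> s i <> (x, y + 1)) ->
  crossing_parity x (y + 1) =
  xorb (crossing_parity x y) (xorb (on_ray x (y + 1) (s O)) (on_ray x (y + 1) (s l))).
Proof.
  intros Fs; unfold crossing_parity.
  rewrite <- xor_upto_telescope with (h := fun i => on_ray x (y + 1) (s i)).
  rewrite (xor_upto_ext (fun i => xorb (on_ray x (y + 1) (s i)) (on_ray x (y + 1) (s (S i))))
    (fun i => xorb (ray_crossing (s i) (s (S i)) x y) (ray_crossing (s i) (s (S i)) x (y + 1))))
    by (intros i Hi; symmetry; apply ray_crossing_shift_up; [apply Ws | apply Fs ..]; lia).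
  rewrite xor_upto_xorb. destruct (xor_upto _ l), (xor_upto _ l); reflexivity.
Qed.

Lemma side_shift_up x y : off_curve (x, y) -> off_curve (x, y + 1) ->
  side (x, y) = side (x, y + 1).
Proof.
  intros [_ [Ftop Fbot]] [Gs [Gtop Gbot]]; unfold side; simpl in *.
  rewrite crossing_parity_shift_up by exact Gs; unfold on_ray.
  destruct (crossing_parity x y), (s O) as [a0 b0], (s l) as [a1 b1]; simpl in *;
    destruct_Z_tests.
Qed.

Lemma side_step p q : off_curve p -> off_curve q -> unit_step (gsub q p) -> side p = side q.
Proof.
  intros Hp Hq U; destruct p as [x y].
  destruct (neighbor_cases _ _ U) as [-> | [-> | [-> | ->]]]; simpl in *.
  - now apply side_shift_right.
  - replace x with (x - 1 + 1) in Hp |- * at 1 by lia. symmetry; now apply side_shift_right.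
  - now apply side_shift_up.
  - replace y with (y - 1 + 1) in Hp |- * at 1 by lia. symmetry; now apply side_shift_up.
Qed.

Lemma side_constant_on_walk m (w : nat -> gauss) : is_walk m w ->
  (forall j, (j <= m)%nat -> off_curve (w j)) ->
  forall j, (j <= m)%nat -> side (w j) = side (w O).
Proof.
  intros Ww Off j; induction j as [|j IH]; intros Hj; [reflexivity|].
  rewrite <- IH by lia. symmetry; apply side_step; [apply Off; lia .. | apply Ww; lia].
Qed.

Lemma side_top_row c : (forall i, (i <= l)%nat -> snd (s i) <= snd (s O)) ->
  side (fst (s O) + c, snd (s O)) = (c <=? 0).
Proof.
  intros Top; unfold side, crossing_parity.
  rewrite xor_upto_false.
  2:{ intros i Hi; unfold ray_crossing.
      assert (snd (s i) <= snd (s O)) by (apply Top; lia).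
      assert (snd (s (S i)) <= snd (s O)) by (apply Top; lia).
      simpl; destruct_Z_tests; now rewrite !andb_false_r. }
  assert (snd (s l) <= snd (s O)) by (apply Top; lia).
  simpl; destruct (s O) as [a0 b0]; simpl in *; destruct_Z_tests.
Qed.

End Side.

Lemma exists_argmax (f : nat -> Z) l :
  exists i, (i <= l)%nat /\ forall j, (j <= l)%nat -> f j <= f i.
Proof.
  induction l as [|l [i [Hi Hmax]]].
  - exists O; split; [lia|]; intros j Hj; replace j with O by lia; lia.
  - destruct (Z_le_gt_dec (f (S l)) (f i)).
    + exists i; split; [lia|]; intros j Hj.
      destruct (Nat.eq_dec j (S l)) as [-> |]; [lia | apply Hmax; lia].
    + exists (S l); split; [lia|]; intros j Hj.
      destruct (Nat.eq_dec j (S l)) as [-> |]; [lia|]; specialize (Hmax j ltac:(lia)); lia.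
Qed.

Lemma exists_argmin (f : nat -> Z) l :
  exists i, (i <= l)%nat /\ forall j, (j <= l)%nat -> f i <= f j.
Proof.
  destruct (exists_argmax (fun j => - f j) l) as [i [Hi Hmax]].
  exists i; split; [exact Hi|]; intros j Hj; specialize (Hmax j Hj); lia.
Qed.

Lemma exists_subwalk l z a b : is_walk l z -> (a <= l)%nat -> (b <= l)%nat ->
  exists m w, is_walk m w /\ w O = z a /\ w m = z b /\
    forall i, (i <= m)%nat -> exists j, (j <= l)%nat /\ w i = z j.
Proof.
  intros W Ha Hb; destruct (Nat.le_gt_cases a b).
  - exists (b - a)%nat, (fun i => z (a + i)%nat); repeat split.
    + intros j Hj; replace (a + S j)%nat with (S (a + j)) by lia; apply W; lia.
    + f_equal; lia.
    + f_equal; lia.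
    + intros i Hi; exists (a + i)%nat; split; [lia | reflexivity].
  - exists (a - b)%nat, (fun i => z (a - i)%nat); repeat split.
    + intros j Hj; apply unit_step_gsub_sym.
      replace (a - j)%nat with (S (a - S j)) by lia; apply W; lia.
    + f_equal; lia.
    + f_equal; lia.
    + intros i Hi; exists (a - i)%nat; split; [lia | reflexivity].
Qed.

Definition chord (l : nat) (z : nat -> gauss) (c : Z) : Prop :=
  exists t u, (t <= l)%nat /\ (u <= l)%nat /\ gsub (z t) (z u) = (c, 0).

Definition translate (z : nat -> gauss) (c : Z) (j : nat) : gauss :=
  (fst (z j) + c, snd (z j)).

Lemma translate_walk l z c : is_walk l z -> is_walk l (translate z c).
Proof.
  intros W j Hj; specialize (W j Hj); unfold unit_step, gsub, translate in *; simpl in *.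
  now replace (fst (z (S j)) + c - (fst (z j) + c)) with (fst (z (S j)) - fst (z j)) by lia.
Qed.

Section Separation.

Variables (l : nat) (z : nat -> gauss) (m : nat) (w : nat -> gauss).
Hypotheses (Wz : is_walk l z) (Ww : is_walk m w)
  (w_in_z : forall i, (i <= m)%nat -> exists j, (j <= l)%nat /\ w i = z j)
  (w_start_top : forall j, (j <= l)%nat -> snd (z j) <= snd (w O))
  (w_end_bottom : forall j, (j <= l)%nat -> snd (w m) <= snd (z j)).

Lemma translate_off_curve c : ~ chord l z c ->
  forall j, (j <= l)%nat -> off_curve m w (translate z c j).
Proof.
  intros NC j Hj; unfold off_curve, translate; simpl.
  destruct (w_in_z O ltac:(lia)) as [jt [Hjt Et]].
  destruct (w_in_z m ltac:(lia)) as [jb [Hjb Eb]].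
  assert (Htop := w_start_top j Hj); assert (Hbot := w_end_bottom j Hj).
  split; [|split].
  - intros i Hi E; destruct (w_in_z i Hi) as [j' [Hj' E']]; rewrite E' in E.
    apply NC; exists j', j; repeat split; try assumption.
    unfold gsub; rewrite E; simpl; f_equal; lia.
  - intros [E1 E2]; apply NC; exists jt, j; repeat split; try assumption.
    unfold gsub; rewrite <- Et; f_equal; lia.
  - intros [E1 E2]; apply NC; exists jb, j; repeat split; try assumption.
    unfold gsub; rewrite <- Eb; f_equal; lia.
Qed.

Lemma side_translate c : ~ chord l z c ->
  forall j, (j <= l)%nat -> side m w (translate z c j) = (c <=? 0).
Proof.
  intros NC j Hj.
  destruct (w_in_z O ltac:(lia)) as [jt [Hjt Et]].
  assert (Off := translate_off_curve c NC).
  rewrite (side_constant_on_walk m w Ww l _ (translate_walk l z c Wz) Off j Hj).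
  rewrite <- (side_constant_on_walk m w Ww l _ (translate_walk l z c Wz) Off jt Hjt).
  unfold translate; rewrite <- Et; apply side_top_row.
  intros i Hi; destruct (w_in_z i Hi) as [j' [Hj' ->]]; apply w_start_top; exact Hj'.
Qed.

End Separation.

Lemma chord_split l z k N : is_walk l z -> 1 < k -> chord l z (k * N) ->
  chord l z N \/ chord l z ((k - 1) * N).
Proof.
  intros W Hk [t [u [Ht [Hu Htu]]]].
  destruct (classic (chord l z N)) as [| NC1]; [now left|].
  destruct (classic (chord l z ((k - 1) * N))) as [| NC2]; [now right|].
  exfalso.
  destruct (exists_argmax (fun i => snd (z i)) l) as [iT [HiT Top]].
  destruct (exists_argmin (fun i => snd (z i)) l) as [iB [HiB Bot]].
  destruct (exists_subwalk l z iT iB W HiT HiB) as (m & w & Ww & E0 & Em & w_in_z).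
  assert (NC2' : ~ chord l z (- ((k - 1) * N))).
  { intros [t' [u' [Ht' [Hu' E]]]]; apply NC2; exists u', t'; repeat split; try assumption.
    unfold gsub in *; injection E as Ex Ey; f_equal; lia. }
  assert (S1 := side_translate l z m w W Ww w_in_z ltac:(rewrite E0; exact Top)
                  ltac:(rewrite Em; exact Bot) N NC1 u Hu).
  assert (S2 := side_translate l z m w W Ww w_in_z ltac:(rewrite E0; exact Top)
                  ltac:(rewrite Em; exact Bot) _ NC2' t Ht).
  replace (translate z (- ((k - 1) * N)) t) with (translate z N u) in S2
    by (unfold gsub, translate in *; injection Htu as Ex Ey; f_equal; lia).
  rewrite S1 in S2.
  assert (N <> 0) by (intros ->; apply NC1; exists O, O; repeat split; [lia .. |];
    unfold gsub; f_equal; lia).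
  destruct (Z.leb_spec N 0), (Z.leb_spec (- ((k - 1) * N)) 0); try discriminate; nia.
Qed.

Theorem chord_of_chord_mul l z k N : is_walk l z -> 1 <= k -> chord l z (k * N) -> chord l z N.
Proof.
  intros W Hk; replace k with (k - 1 + 1) by lia.
  assert (Hk' : 0 <= k - 1) by lia; revert Hk'; generalize (k - 1); clear k Hk.
  apply (natlike_ind (fun j => chord l z ((j + 1) * N) -> chord l z N)).
  - now rewrite Z.mul_1_l.
  - intros j Hj IH C. destruct (chord_split l z (Z.succ j + 1) N W ltac:(lia) C) as [|C'];
      [assumption | apply IH].
    now replace (j + 1) with (Z.succ j + 1 - 1) by lia.
Qed.

(* Step a of z is subdivided into k unit steps: point k a + t of the dilated
   walk is k z_a + t (z_(a+1) - z_a). *)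
Definition dilate (k : Z) (z : nat -> gauss) (i : nat) : gauss :=
  let a := (i / Z.to_nat k)%nat in
  let t := Z.of_nat (i mod Z.to_nat k) in
  (k * fst (z a) + t * (fst (z (S a)) - fst (z a)),
   k * snd (z a) + t * (snd (z (S a)) - snd (z a))).

Lemma div_mod_mul_add (n a t : nat) : (t < n)%nat ->
  ((n * a + t) / n = a /\ (n * a + t) mod n = t)%nat.
Proof.
  intros Ht; split.
  - symmetry; apply Nat.div_unique with t; lia.
  - symmetry; apply Nat.mod_unique with a; lia.
Qed.

Lemma dilate_step k z i : 1 <= k ->
  gsub (dilate k z (S i)) (dilate k z i) =
  gsub (z (S (i / Z.to_nat k)%nat)) (z (i / Z.to_nat k)%nat).
Proof.
  intros Hk; unfold dilate; set (n := Z.to_nat k).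
  assert (Ek : k = Z.of_nat n) by lia.
  set (a := (i / n)%nat); set (t := (i mod n)%nat).
  assert (Hi : i = (n * a + t)%nat) by (apply Nat.div_mod; lia).
  assert (Ht : (t < n)%nat) by (apply Nat.mod_upper_bound; lia).
  destruct (Nat.eq_dec (S t) n) as [E | E].
  - destruct (div_mod_mul_add n (S a) 0 ltac:(lia)) as [Ea Et].
    replace (n * S a + 0)%nat with (S i) in Ea, Et by lia; rewrite Ea, Et.
    replace (Z.of_nat t) with (k - 1) by lia; unfold gsub; simpl; f_equal; ring.
  - destruct (div_mod_mul_add n a (S t) ltac:(lia)) as [Ea Et].
    replace (n * a + S t)%nat with (S i) in Ea, Et by lia; rewrite Ea, Et.
    rewrite Nat2Z.inj_succ; unfold gsub; simpl; f_equal; ring.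
Qed.

Lemma dilate_walk k l z : 1 <= k -> is_walk l z -> is_walk (Z.to_nat k * l) (dilate k z).
Proof.
  intros Hk W i Hi; rewrite dilate_step by exact Hk; apply W.
  apply Nat.Div0.div_lt_upper_bound; lia.
Qed.

Lemma dilate_mul k z a : 1 <= k -> dilate k z (Z.to_nat k * a) = (k * fst (z a), k * snd (z a)).
Proof.
  intros Hk; unfold dilate.
  destruct (div_mod_mul_add (Z.to_nat k) a 0 ltac:(lia)) as [Ea Et].
  rewrite Nat.add_0_r in Ea, Et; rewrite Ea, Et; simpl; f_equal; ring.
Qed.

Lemma dilate_chord l z k c : 1 <= k -> chord l z c -> chord (Z.to_nat k * l) (dilate k z) (k * c).
Proof.
  intros Hk [t [u [Ht [Hu E]]]].
  exists (Z.to_nat k * t)%nat, (Z.to_nat k * u)%nat.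
  split; [nia | split; [nia |]].
  rewrite !dilate_mul by exact Hk; unfold gsub in *; injection E as Ex Ey; simpl.
  f_equal; nia.
Qed.

Lemma dilate_on_segment k l z i : 1 <= k -> (1 <= l)%nat -> (i <= Z.to_nat k * l)%nat ->
  exists a t, (a < l)%nat /\ 0 <= t <= k /\
    dilate k z i = (k * fst (z a) + t * (fst (z (S a)) - fst (z a)),
                    k * snd (z a) + t * (snd (z (S a)) - snd (z a))).
Proof.
  intros Hk Hl Hi; set (n := Z.to_nat k).
  destruct (Nat.eq_dec i (n * l)) as [E | E].
  - exists (l - 1)%nat, k; split; [lia | split; [lia |]].
    rewrite E; unfold n; rewrite dilate_mul by exact Hk.
    replace (S (l - 1)) with l by lia; f_equal; ring.
  - exists (i / n)%nat, (Z.of_nat (i mod n)); split; [| split; [| reflexivity]].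
    + apply Nat.Div0.div_lt_upper_bound; lia.
    + assert (i mod n < n)%nat by (apply Nat.mod_upper_bound; lia); lia.
Qed.

Lemma scaled_gap_cases (k r t s : Z) (w u v : gauss) :
  Z.abs r < k -> 0 <= t <= k -> 0 <= s <= k -> unit_step u -> unit_step v ->
  k * fst w = r + t * fst u - s * fst v -> k * snd w = t * snd u - s * snd v ->
  exists e f : nat, (e <= 1)%nat /\ (f <= 1)%nat /\
    w = (Z.of_nat e * fst u - Z.of_nat f * fst v, Z.of_nat e * snd u - Z.of_nat f * snd v).
Proof.
  intros Hr Ht Hs Hu Hv Ex Ey; destruct w as [wx wy]; simpl in Ex, Ey.
  destruct (unit_step_cases u Hu) as [-> | [-> | [-> | ->]]];
  destruct (unit_step_cases v Hv) as [-> | [-> | [-> | ->]]]; simpl in Ex, Ey;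
  assert (Bx : -2 <= wx <= 2) by nia; assert (By : -2 <= wy <= 2) by nia;
  assert (Cx : wx = -2 \/ wx = -1 \/ wx = 0 \/ wx = 1 \/ wx = 2) by lia;
  assert (Cy : wy = -2 \/ wy = -1 \/ wy = 0 \/ wy = 1 \/ wy = 2) by lia;
  destruct Cx as [-> | [-> | [-> | [-> | ->]]]];
  destruct Cy as [-> | [-> | [-> | [-> | ->]]]];
  try (exfalso; lia);
  let witness e f := exists e, f; split; [lia | split; [lia | reflexivity]] in
  first [witness 0%nat 0%nat | witness 1%nat 0%nat | witness 0%nat 1%nat | witness 1%nat 1%nat].
Qed.

Lemma chord_of_dilated_chord l z k d r : is_walk l z -> Z.abs r < k ->
  chord (Z.to_nat k * l) (dilate k z) (k * d + r) -> chord l z d.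
Proof.
  intros W Hr [i [j [Hi [Hj E]]]].
  destruct (Nat.eq_dec l 0) as [-> | Hl].
  - replace i with O in E by lia; replace j with O in E by lia.
    unfold gsub in E; injection E as Ex _.
    assert (d = 0) as -> by nia.
    exists O, O; repeat split; [lia .. |]; unfold gsub; f_equal; lia.
  - destruct (dilate_on_segment k l z i ltac:(lia) ltac:(lia) Hi) as [b [s [Hb [Hs Ei]]]].
    destruct (dilate_on_segment k l z j ltac:(lia) ltac:(lia) Hj) as [a [t [Ha [Ht Ej]]]].
    rewrite Ei, Ej in E; unfold gsub in E; injection E as Ex Ey.
    destruct (scaled_gap_cases k r t s (fst (z b) - fst (z a) - d, snd (z b) - snd (z a))
                (gsub (z (S a)) (z a)) (gsub (z (S b)) (z b)) Hr Ht Hs (W a Ha) (W b Hb))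
      as [e [f [He [Hf Ew]]]]; unfold gsub in *; simpl in *; [lia | lia |].
    injection Ew as Ewx Ewy.
    exists (b + f)%nat, (a + e)%nat; split; [lia | split; [lia |]].
    destruct e as [|[|]], f as [|[|]]; try lia; rewrite ?Nat.add_0_r, ?Nat.add_1_r;
      unfold gsub; simpl Z.of_nat in *; f_equal; lia.
Qed.

Theorem mainTheorem2 (n d : nat) (k r : Z) :
  (0 < n)%nat -> (0 < d)%nat ->
  Z.of_nat n = k * Z.of_nat d + r ->
  Z.abs r + 1 <= k ->
  in_A n d.
Proof.
  intros _ _ Hn Hk (l & z & W & (t & u & Ht & Hu & Htu) & Havoid).
  assert (C : chord (Z.to_nat k * l) (dilate k z) (k * Z.of_nat n))
    by (apply dilate_chord; [lia | exists t, u; auto]).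
  apply chord_of_chord_mul in C; [| apply dilate_walk; [lia | exact W] | lia].
  rewrite Hn in C; apply chord_of_dilated_chord in C as (t' & u' & Ht' & Hu' & E);
    [| exact W | lia].
  exact (Havoid t' u' Ht' Hu' E).
Qed.
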